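(* Let $G$ be a finite simple graph of order $n$ without isolated vertices such that its maximum degree is $\Delta(G)=n-1$. Then $\gamma_t(G)=2$ and $TDV(v)\le n-1$ for every $v\in V(G)$; moreover $TDV(v)=n-1$ if and only if $\deg(v)=n-1$.
   Context: A set $D \subseteq V(G)$ is a total dominating set of $G$ if every vertex of $G$ has a neighbor in $D$. $\gamma_t(G)$ is the minimum cardinality of a total dominating set; a minimum one is a $\gamma_t(G)$-set. $TDV(v)$ is the number of $\gamma_t(G)$-sets containing $v$. *)

From mathcomp Require Import all_boot.
Set Implicit Arguments. Unset Strict Implicit. Unset Printing Implicit Defensive.

(* A finite simple graph: vertex type T : finType, adjacency e : rel T that is
   symmetric and irreflexive (hypotheses stated in the theorem). *)

Section TotalDomination.
Variables (T : finType) (e : rel T).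

Definition nbh (v : T) : {set T} := [set u | e v u].
Definition deg (v : T) : nat := #|nbh v|.

Definition is_tds (D : {set T}) : bool := [forall v, [exists u in D, e v u]].

(* gamma_t(G): minimum cardinality of a total dominating set
   (defaults to #|T| if none exists; irrelevant without isolated vertices) *)
Definition gamma_t : nat := \big[minn/#|T|]_(D : {set T} | is_tds D) #|D|.

Definition is_gamma_t_set (D : {set T}) : bool := is_tds D && (#|D| == gamma_t).

Definition TDV (v : T) : nat := #|[set D : {set T} | is_gamma_t_set D & v \in D]|.

End TotalDomination.

From mathcomp Require Import all_boot all_order.
Set Implicit Arguments. Unset Strict Implicit. Unset Printing Implicit Defensive.
Import Order.TTheory.

(* A vertex w adjacent to all others totally dominates every vertex but itself,
   so w together with any other vertex is a total dominating set, while no single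
   vertex can dominate itself: hence gamma_t = 2.  A gamma_t-set containing v is
   then {v, u} with u a neighbour of v, so TDV(v) <= deg(v) <= n - 1; when v is
   adjacent to all other vertices, each of the n - 1 pairs {v, u} is a gamma_t-set. *)

Section TotalDomination.
Variables (T : finType) (e : rel T).

Lemma gamma_t_le_tds D : is_tds e D -> gamma_t e <= #|D|.
Proof.
move=> tdsD; have := @bigmin_le_cond _ nat _ #|T| D (is_tds e) (fun D => #|D|) tdsD.
by rewrite minEnat.
Qed.

Lemma gamma_t_ge m :
  m <= #|T| -> (forall D, is_tds e D -> m <= #|D|) -> m <= gamma_t e.
Proof.
move=> m_le_n tds_ge; have := @le_bigmin _ nat _ (index_enum {set T})
  (fun D => #|D|) #|T| m (is_tds e) m_le_n tds_ge.
by rewrite minEnat.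
Qed.

Hypotheses (e_sym : symmetric e) (e_irr : irreflexive e).

Lemma adj_neq u v : e u v -> u != v.
Proof. by apply: contraTneq => ->; rewrite e_irr. Qed.

Lemma nbh_subC1 v : nbh e v \subset [set~ v].
Proof. by apply/subsetP=> u; rewrite in_setC1 inE eq_sym => /adj_neq. Qed.

Lemma deg_le_pred v : deg e v <= #|T|.-1.
Proof. by rewrite /deg -(cardsC1 v) subset_leq_card ?nbh_subC1. Qed.

Lemma adj_of_deg_max v u : deg e v = #|T|.-1 -> u != v -> e v u.
Proof.
move=> deg_v u_neq_v.
have /eqP nbh_v : nbh e v == [set~ v] by rewrite eqEcard nbh_subC1 cardsC1 -deg_v /deg leqnn.
have : u \in [set~ v] by rewrite in_setC1.
by rewrite -nbh_v inE.
Qed.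

Lemma tds_card_ge2 (w : T) D : is_tds e D -> 2 <= #|D|.
Proof.
move/forallP=> tdsD.
have /existsP [u /andP [uD _]] := tdsD w.
have /existsP [u' /andP [u'D uu']] := tdsD u.
have pair_sub : [set u; u'] \subset D by apply/subsetP=> x /set2P [] ->.
by apply: leq_trans (subset_leq_card pair_sub); rewrite cards2 adj_neq.
Qed.

Lemma tds_pair_deg_max v u : deg e v = #|T|.-1 -> u != v -> is_tds e [set v; u].
Proof.
move=> deg_v u_neq_v; apply/forallP=> x; apply/existsP.
have [->|x_neq_v] := eqVneq x v.
  by exists u; rewrite !inE eqxx orbT adj_of_deg_max.
by exists v; rewrite !inE eqxx e_sym adj_of_deg_max.
Qed.

Lemma gamma_t_deg_max v : deg e v = #|T|.-1 -> 1 < #|T| -> gamma_t e = 2.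
Proof.
move=> deg_v n_gt1; apply/eqP; rewrite eqn_leq; apply/andP; split.
  have [u vu] : exists u, e v u.
    have : 0 < deg e v by rewrite deg_v -subn1 subn_gt0.
    by rewrite card_gt0 => /set0Pn [u]; rewrite inE; exists u.
  have u_neq_v : u != v by rewrite eq_sym adj_neq.
  apply: leq_trans (gamma_t_le_tds (tds_pair_deg_max deg_v u_neq_v)) _.
  by rewrite cards2 eq_sym u_neq_v.
by apply: gamma_t_ge => // D; apply: tds_card_ge2.
Qed.

Section GammaTwo.
Hypothesis gamma_t2 : gamma_t e = 2.

Lemma gamma_t_set_pair v D : is_gamma_t_set e D -> v \in D ->
  exists2 u, u \in nbh e v & D = [set v; u].
Proof.
rewrite /is_gamma_t_set gamma_t2 => /andP [tdsD /eqP cardD] vD.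
have /existsP [u /andP [uD vu]] := forallP tdsD v.
exists u; first by rewrite inE.
apply/eqP; rewrite eq_sym eqEcard cardD cards2 adj_neq // andbT.
by apply/subsetP=> x /set2P [] ->.
Qed.

Lemma TDV_le_deg v : TDV e v <= deg e v.
Proof.
apply: leq_trans (leq_imset_card (fun u => [set v; u]) (nbh e v)).
apply/subset_leq_card/subsetP=> D; rewrite inE => /andP [gD vD].
by have [u u_adj ->] := gamma_t_set_pair gD vD; apply: imset_f.
Qed.

End GammaTwo.

Lemma TDV_deg_max v : deg e v = #|T|.-1 -> 1 < #|T| -> TDV e v = #|T|.-1.
Proof.
move=> deg_v n_gt1; have gamma_t2 := gamma_t_deg_max deg_v n_gt1.
apply/eqP; rewrite eqn_leq -{1}deg_v TDV_le_deg //= -(cardsC1 v).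
have pair_inj : {in [set~ v] &, injective (fun u => [set v; u])}.
  move=> a b; rewrite !in_setC1 => a_neq_v _ eq_ab.
  have : a \in [set v; b] by rewrite -eq_ab !inE eqxx orbT.
  by rewrite !inE (negbTE a_neq_v) => /eqP.
rewrite -(card_in_imset pair_inj); apply/subset_leq_card/subsetP=> D.
case/imsetP=> u; rewrite in_setC1 => u_neq_v ->.
rewrite inE /is_gamma_t_set gamma_t2 tds_pair_deg_max // cards2 (eq_sym v) u_neq_v.
by rewrite !inE eqxx.
Qed.

End TotalDomination.

Theorem proposition2p13 (T : finType) (e : rel T)
  (e_sym : symmetric e) (e_irr : irreflexive e)
  (no_isolated : forall v : T, 0 < deg e v)
  (max_deg : exists w : T, deg e w = #|T|.-1) :
  gamma_t e = 2 /\
  (forall v : T, TDV e v <= #|T|.-1) /\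
  (forall v : T, TDV e v = #|T|.-1 <-> deg e v = #|T|.-1).
Proof.
have [w deg_w] := max_deg.
have n_gt1 : 1 < #|T| by have := no_isolated w; rewrite deg_w; case: #|T| => [|[]].
have gamma_t2 := gamma_t_deg_max e_sym e_irr deg_w n_gt1.
have TDV_le v : TDV e v <= #|T|.-1.
  exact: leq_trans (TDV_le_deg e_irr gamma_t2 v) (deg_le_pred e_irr v).
split=> //; split=> // v; split=> [TDV_v | deg_v].
  by apply/eqP; rewrite eqn_leq deg_le_pred //= -TDV_v TDV_le_deg.
exact: TDV_deg_max.
Qed.
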